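(* For every $N\ge 2$, the median distance $Md_N$ and the average distance $\bar d_N=\frac{N+1}{3}$ of the path (chain) on $N$ nodes satisfy $Md_N\le \bar d_N$, with equality if and only if $N\in\{2,5,8,11\}$.
   Context: The path on $N$ nodes has exactly $N-j$ unordered pairs of nodes at (shortest-path) distance $j$, $j=1,\dots,N-1$. The median distance is the median of the multiset of these $N(N-1)/2$ distances (the average of the two middle values if this number is even); the average distance is the arithmetic mean of that multiset. *)

From mathcomp Require Import all_boot all_order all_algebra.
Set Implicit Arguments. Unset Strict Implicit. Unset Printing Implicit Defensive.
Import Order.TTheory GRing.Theory Num.Theory.
Local Open Scope ring_scope.

(* Multiset of shortest-path distances over unordered pairs {i,j}, i<j, of
   nodes 0..N-1 of the path P_N (distance |i-j| = j - i). *)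
Definition path_dists (N : nat) : seq nat :=
  flatten [seq [seq (j - i)%N | j <- iota 0 N & (i < j)%N] | i <- iota 0 N].

Definition median (s : seq nat) : rat :=
  let t := sort leq s in
  let M := size t in
  if odd M then (nth 0%N t M./2)%:R
  else ((nth 0%N t M./2.-1)%:R + (nth 0%N t M./2)%:R) / 2.

Definition mean (s : seq nat) : rat := (sumn s)%:R / (size s)%:R.

Definition median_distance (N : nat) : rat := median (path_dists N).
Definition average_distance (N : nat) : rat := mean (path_dists N).

From mathcomp Require Import all_boot all_order all_algebra.
From mathcomp Require Import zify.
Set Implicit Arguments. Unset Strict Implicit. Unset Printing Implicit Defensive.
Import Order.TTheory GRing.Theory Num.Theory.
Local Open Scope ring_scope.

(* Deleting node 0 from the path on N+1 nodes leaves the path on N nodes, and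
   node 0 is at distances 1, ..., N from the others.  By induction the
   N(N-1)/2 distances sum to C(N+1,3), so the average is (N+1)/3, and exactly
   C(N-D,2) of them exceed D.  For D = floor(N/3) and N >= 14 this is less than
   half of all pairs, so the median is at most floor(N/3) < (N+1)/3.  The
   remaining cases 2 <= N < 14 are checked by computation. *)

Lemma path_distsS N : path_dists N.+1 = iota 1 N ++ path_dists N.
Proof.
rewrite /path_dists /= (iotaDl 1 0) filter_map (@eq_filter _ _ predT) //.
rewrite filter_predT -map_comp -map_comp; congr (_ ++ flatten _).
apply: eq_map => i /=; rewrite filter_map -map_comp.
by apply: eq_map => j /=; rewrite subSS.
Qed.

Lemma sumn_iota1 n : sumn (iota 1 n) = 'C(n.+1, 2).
Proof.
elim: n => [|n IHn] //; rewrite -[n.+1]addn1 iotaD sumn_cat IHn /=.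
by rewrite addn0 add1n addn1 [RHS]binS bin1.
Qed.

Lemma count_gt_iota1 D n : count (fun d => D < d)%N (iota 1 n) = (n - D)%N.
Proof.
elim: n => [|n IHn] //; rewrite -[n.+1]addn1 iotaD count_cat IHn /= add1n; lia.
Qed.

Lemma size_path_dists N : size (path_dists N) = 'C(N, 2).
Proof.
by elim: N => [|N IHN] //; rewrite path_distsS size_cat size_iota IHN binS bin1 addnC.
Qed.

Lemma sumn_path_dists N : sumn (path_dists N) = 'C(N.+1, 3).
Proof.
by elim: N => [|N IHN] //; rewrite path_distsS sumn_cat sumn_iota1 IHN [in RHS]binS addnC.
Qed.

(* The pairs {i, j} with j - i > D correspond to the pairs {i, j - D} among
   the first N - D nodes. *)
Lemma count_gt_path_dists D N :
  count (fun d => D < d)%N (path_dists N) = 'C(N - D, 2).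
Proof.
elim: N => [|N IHN]; first by rewrite sub0n.
rewrite path_distsS count_cat count_gt_iota1 IHN.
have [leDN|ltND] := leqP D N; first by rewrite subSn // binS bin1 addnC.
by rewrite (eqP ltND) (eqP (ltnW ltND)).
Qed.

Lemma average_distanceE N : (2 <= N)%N -> average_distance N = N.+1%:R / 3.
Proof.
move=> N_ge2; rewrite /average_distance /mean size_path_dists sumn_path_dists.
have C2_gt0 : (0 < 'C(N, 2))%N by rewrite bin_gt0.
apply/eqP; rewrite eqr_div ?pnatr_eq0 -?lt0n // -!natrM eqr_nat.
by rewrite mulnC -(mul_bin_diag N.+1 2).
Qed.

Lemma sorted_nth_le_count (t : seq nat) k D : sorted leq t ->
  (k < count (fun x => x <= D) t)%N -> (nth 0 t k <= D)%N.
Proof.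
move=> t_sorted; apply: contraTT; rewrite -ltnNge -leqNgt => lt_D_tk.
have [le_t_k|lt_k_t] := leqP (size t) k; first exact: leq_trans (count_size _ _) le_t_k.
have tail_gt : count (fun x => x <= D)%N (drop k t) = 0%N.
  apply/eqP; rewrite -leqn0 leqNgt -has_count; apply/hasPn => x /(nthP 0) [j].
  rewrite size_drop nth_drop ltn_subRL -ltnNge => lt_kj_t <-.
  apply: (leq_trans lt_D_tk); apply: (sorted_leq_nth leq_trans leqnn) => //.
  exact: leq_addr.
rewrite -[t](cat_take_drop k) count_cat tail_gt addn0.
by apply: leq_trans (count_size _ _) _; rewrite size_take lt_k_t.
Qed.

Lemma median_le (s : seq nat) D :
  ((count (fun x => D < x) s).*2 < size s)%N -> median s <= D%:R.
Proof.
move=> few_gt; rewrite /median.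
set t := sort leq s.
have t_sorted : sorted leq t by apply: sort_sorted; exact: leq_total.
have mid_lt : ((size t)./2 < count (fun x => x <= D)%N t)%N.
  have count_le : count (fun x => x <= D)%N s = (size s - count (fun x => D < x)%N s)%N.
    rewrite -(count_predC (fun x => D < x)%N s) addKn.
    by apply: eq_count => x /=; rewrite leqNgt.
  rewrite count_sort size_sort count_le -divn2; lia.
have le_mid : (nth 0 t (size t)./2 <= D)%N by apply: sorted_nth_le_count.
have le_premid : (nth 0 t (size t)./2.-1 <= D)%N.
  by apply: sorted_nth_le_count; rewrite // (leq_ltn_trans (leq_pred _)).
case: ifP => _; first by rewrite ler_nat.
by rewrite ler_pdivrMr // -natrD -natrM ler_nat; lia.
Qed.

Lemma median_lt_average_distance N : (14 <= N)%N ->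
  median_distance N < average_distance N.
Proof.
move=> N_ge14; rewrite average_distanceE; last exact: leq_trans N_ge14.
set D := (N %/ 3)%N.
have N_eq : N = (D * 3 + N %% 3)%N by apply: divn_eq.
have N_mod : (N %% 3 < 3)%N by rewrite ltn_mod.
apply: (@le_lt_trans _ _ D%:R).
  apply: median_le; rewrite count_gt_path_dists size_path_dists.
  have := mul_bin_diag N 1; have := mul_bin_diag (N - D) 1; rewrite !bin1.
  nia.
by rewrite ltr_pdivlMr // -natrM ltr_nat; lia.
Qed.

Lemma median_average_distance_small :
  all (fun N => (median_distance N <= average_distance N) &&
                ((median_distance N == average_distance N) == (N \in [:: 2; 5; 8; 11]%N)))
      (iota 2 12).
Proof. by vm_compute. Qed.

Theorem mainTheorem10 (N : nat) : (2 <= N)%N ->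
  average_distance N = (N.+1)%:R / 3 /\
  median_distance N <= average_distance N /\
  (median_distance N = average_distance N <-> N \in [:: 2; 5; 8; 11]%N).
Proof.
move=> N_ge2; split; first exact: average_distanceE.
have [N_ge14|N_lt14] := leqP 14 N.
  have median_lt := median_lt_average_distance N_ge14.
  have N_notin : N \notin [:: 2; 5; 8; 11]%N by rewrite !inE; lia.
  split; first exact: ltW.
  rewrite (negbTE N_notin); split=> // median_eq.
  by rewrite median_eq ltxx in median_lt.
have /allP/(_ N) := median_average_distance_small.
rewrite mem_iota N_ge2 (leq_trans N_lt14) // => /(_ isT) /andP [le_median /eqP <-].
by split; last exact: rwP eqP.
Qed.
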